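(* Let $\overline{\mathbf{C}}=(\mathbf{C},\perp)$ be an orthogonal category, $W\subseteq\mathrm{Mor}\,\mathbf{C}$ a subset of morphisms, $L:\mathbf{C}\to\mathbf{C}[W^{-1}]$ the localization functor, and $\overline{\mathbf{C}[W^{-1}]}=(\mathbf{C}[W^{-1}],\perp_W)$. Then the pullback functor $L^\ast=(-)\circ L:\mathbf{Alg}_{\mathsf{As}}(\mathbf{M})^{\mathbf{C}[W^{-1}]}\to\mathbf{Alg}_{\mathsf{As}}(\mathbf{M})^{\mathbf{C}}$ restricts to an equivalence of categories $$L^\ast:\mathbf{QFT}(\overline{\mathbf{C}[W^{-1}]})\xrightarrow{\ \sim\ }\mathbf{QFT}(\overline{\mathbf{C}})^{W\text{-}\mathrm{const}}.$$
   Context: An orthogonal category $\overline{\mathbf{C}}=(\mathbf{C},\perp)$ is a small category $\mathbf{C}$ together with a set $\perp$ of pairs of morphisms of $\mathbf{C}$ with common target such that (symmetry) $(f_1,f_2)\in\perp$ implies $(f_2,f_1)\in\perp$, and ($\circ$-stability) $(f_1,f_2)\in\perp$ implies $(g f_1 h_1, g f_2 h_2)\in\perp$ for all composable morphisms $g,h_1,h_2$. We write $f_1\perp f_2$ for $(f_1,f_2)\in\perp$. An orthogonal functor $F:\overline{\mathbf{C}}\to\overline{\mathbf{D}}$ is a functor $F:\mathbf{C}\to\mathbf{D}$ with $F(f_1)\perp_{\mathbf{D}}F(f_2)$ whenever $f_1\perp_{\mathbf{C}}f_2$. Fix a bicomplete closed symmetric monoidal category $(\mathbf{M},\otimes,I)$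 and let $\mathbf{Alg}_{\mathsf{As}}(\mathbf{M})$ be the category of associative unital algebras (monoids) in $\mathbf{M}$. An $\mathbf{M}$-valued AQFT on $\overline{\mathbf{C}}$ is a functor $\mathfrak{A}:\mathbf{C}\to\mathbf{Alg}_{\mathsf{As}}(\mathbf{M})$ such that for all $(f_1:c_1\to c)\perp(f_2:c_2\to c)$ one has $\mu_c\circ(\mathfrak{A}(f_1)\otimes\mathfrak{A}(f_2))=\mu_c^{\mathrm{op}}\circ(\mathfrak{A}(f_1)\otimes\mathfrak{A}(f_2))$ as morphisms $\mathfrak{A}(c_1)\otimes\mathfrak{A}(c_2)\to\mathfrak{A}(c)$, where $\mu_c$ is the multiplication of $\mathfrak{A}(c)$ and $\mu_c^{\mathrm{op}}=\mu_c\circ\tau$ with $\tau$ the symmetry isomorphism. $\mathbf{QFT}(\overline{\mathbf{C}})$ denotes the full subcategory of the functor category $\mathbf{Alg}_{\mathsf{As}}(\mathbf{M})^{\mathbf{C}}$ on such functors. For $W\subseteq \mathrm{Mor}\,\mathbf{C}$, $\mathbf{C}[W^{-1}]$ is the localization of $\mathbf{C}$ at $W$ with localization functor $L$, and $\perp_W$ is the smallest orthogonality relation on $\mathbf{C}[W^{-1}]$ with $L(f_1)\perp_W L(f_2)$ for all $f_1\perp f_2$ (so $L$ is orthogonal). $\mathbf{QFT}(\overline{\mathbf{C}})^{W\text{-}\mathrm{const}}$ is the full subcategory of those $\mathfrak{A}\in\mathbf{QFT}(\overline{\mathbf{C}})$ such that $\mathfrak{A}(f)$ is an isomorphism for all $f\in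 W$. *)

From Stdlib Require Import ProofIrrelevance.

Set Implicit Arguments.
Unset Strict Implicit.

Record Category := {
  Obj :> Type;
  Hom : Obj -> Obj -> Type;
  idm : forall a, Hom a a;
  comp : forall a b c, Hom b c -> Hom a b -> Hom a c;
  comp_id_l : forall a b (f : Hom a b), comp (idm b) f = f;
  comp_id_r : forall a b (f : Hom a b), comp f (idm a) = f;
  comp_assoc : forall a b c d (f : Hom a b) (g : Hom b c) (h : Hom c d),
      comp h (comp g f) = comp (comp h g) f
}.
Arguments Hom {c0} a b.
Arguments idm {c0} a.
Arguments comp {c0 a b c} g f.
Notation "g ∘ f" := (comp g f) (at level 40, left associativity).

Definition is_iso {C : Category} {a b : C} (f : Hom a b) : Prop :=
  exists g : Hom b a, g ∘ f = idm a /\ f ∘ g = idm b.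

Definition bijective {X Y : Type} (e : X -> Y) : Prop :=
  exists e' : Y -> X, (forall x, e' (e x) = x) /\ (forall y, e (e' y) = y).

Definition is_small (J : Category) : Prop :=
  (exists (O : Set) (e : O -> Obj J), bijective e) /\
  (forall a b : J, exists (H : Set) (h : H -> Hom a b), bijective h).

Record Functor (C D : Category) := {
  fobj :> C -> D;
  fmap : forall a b, Hom a b -> Hom (fobj a) (fobj b);
  fmap_id : forall a, fmap (idm a) = idm (fobj a);
  fmap_comp : forall a b c (f : Hom a b) (g : Hom b c),
      fmap (g ∘ f) = fmap g ∘ fmap f
}.
Arguments fmap {C D} f0 {a b} f.

Record NatTrans {C D : Category} (F G : Functor C D) := {
  ntc :> forall a, Hom (F a) (G a);
  ntnat : forall a b (f : Hom a b), fmap G f ∘ ntc a = ntc b ∘ fmap F f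
}.

Definition NatIso {C D : Category} (F G : Functor C D) : Prop :=
  exists alpha : NatTrans F G, forall a, is_iso (alpha a).

Definition FComp {C D E : Category} (G : Functor D E) (F : Functor C D)
  : Functor C E.
Proof.
  refine {| fobj := fun a => G (F a);
            fmap := fun a b f => fmap G (fmap F f) |}.
  - intro a. rewrite !fmap_id. reflexivity.
  - intros a b c f g. rewrite !fmap_comp. reflexivity.
Defined.

Definition IsLimitCone {J M : Category} (Dg : Functor J M) (X : M)
  (p : forall j, Hom X (Dg j)) : Prop :=
  (forall j k (u : Hom j k), fmap Dg u ∘ p j = p k) /\
  (forall (Y : M) (q : forall j, Hom Y (Dg j)),
      (forall j k (u : Hom j k), fmap Dg u ∘ q j = q k) ->
      exists! h : Hom Y X, forall j, p j ∘ h = q j).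

Definition IsColimitCocone {J M : Category} (Dg : Functor J M) (X : M)
  (p : forall j, Hom (Dg j) X) : Prop :=
  (forall j k (u : Hom j k), p k ∘ fmap Dg u = p j) /\
  (forall (Y : M) (q : forall j, Hom (Dg j) Y),
      (forall j k (u : Hom j k), q k ∘ fmap Dg u = q j) ->
      exists! h : Hom X Y, forall j, h ∘ p j = q j).

Definition Bicomplete (M : Category) : Prop :=
  (forall J : Category, is_small J -> forall Dg : Functor J M,
      exists (X : M) (p : forall j, Hom X (Dg j)), @IsLimitCone _ _ Dg X p) /\
  (forall J : Category, is_small J -> forall Dg : Functor J M,
      exists (X : M) (p : forall j, Hom (Dg j) X), @IsColimitCocone _ _ Dg X p).

Record MonStruct (M : Category) := {
  tens : M -> M -> M;
  tensm : forall a a' b b', Hom a a' -> Hom b b' -> Hom (tens a b) (tens a' b');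
  munitob : M;
  assoc : forall a b c, Hom (tens (tens a b) c) (tens a (tens b c));
  assoc_inv : forall a b c, Hom (tens a (tens b c)) (tens (tens a b) c);
  lunit : forall a, Hom (tens munitob a) a;
  lunit_inv : forall a, Hom a (tens munitob a);
  runit : forall a, Hom (tens a munitob) a;
  runit_inv : forall a, Hom a (tens a munitob);
  braid : forall a b, Hom (tens a b) (tens b a)
}.
Arguments tens {M} m a b.
Arguments tensm {M} m {a a' b b'} f g.
Arguments munitob {M} m.
Arguments assoc {M} m a b c.
Arguments assoc_inv {M} m a b c.
Arguments lunit {M} m a.
Arguments lunit_inv {M} m a.
Arguments runit {M} m a.
Arguments runit_inv {M} m a.
Arguments braid {M} m a b.

Definition SymMonLaws (M : Category) (S : MonStruct M) : Prop :=
  let T := tens S in let Tm := @tensm M S in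
  (forall a b, Tm _ _ _ _ (idm a) (idm b) = idm (T a b)) /\
  (forall a a' a'' b b' b'' (f : Hom a a') (f' : Hom a' a'')
          (g : Hom b b') (g' : Hom b' b''),
      Tm _ _ _ _ (f' ∘ f) (g' ∘ g) = Tm _ _ _ _ f' g' ∘ Tm _ _ _ _ f g) /\
  (forall a b c, assoc_inv S a b c ∘ assoc S a b c = idm _ /\
                 assoc S a b c ∘ assoc_inv S a b c = idm _) /\
  (forall a a' b b' c c' (f : Hom a a') (g : Hom b b') (h : Hom c c'),
      Tm _ _ _ _ f (Tm _ _ _ _ g h) ∘ assoc S a b c
      = assoc S a' b' c' ∘ Tm _ _ _ _ (Tm _ _ _ _ f g) h) /\
  (forall a, lunit_inv S a ∘ lunit S a = idm _ /\ lunit S a ∘ lunit_inv S a = idm _) /\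
  (forall a a' (f : Hom a a'), f ∘ lunit S a = lunit S a' ∘ Tm _ _ _ _ (idm _) f) /\
  (forall a, runit_inv S a ∘ runit S a = idm _ /\ runit S a ∘ runit_inv S a = idm _) /\
  (forall a a' (f : Hom a a'), f ∘ runit S a = runit S a' ∘ Tm _ _ _ _ f (idm _)) /\
  (forall a b c d,
      Tm _ _ _ _ (idm a) (assoc S b c d) ∘ assoc S a (T b c) d
        ∘ Tm _ _ _ _ (assoc S a b c) (idm d)
      = assoc S a b (T c d) ∘ assoc S (T a b) c d) /\
  (forall a b, Tm _ _ _ _ (idm a) (lunit S b) ∘ assoc S a (munitob S) b
               = Tm _ _ _ _ (runit S a) (idm b)) /\
  (forall a a' b b' (f : Hom a a') (g : Hom b b'),
      Tm _ _ _ _ g f ∘ braid S a b = braid S a' b' ∘ Tm _ _ _ _ f g) /\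
  (forall a b, braid S b a ∘ braid S a b = idm _) /\
  (forall a b c,
      assoc S b c a ∘ braid S a (T b c) ∘ assoc S a b c
      = Tm _ _ _ _ (idm b) (braid S a c) ∘ assoc S b a c
          ∘ Tm _ _ _ _ (braid S a b) (idm c)).

Record SymMonCat := {
  smc_cat :> Category;
  smc_str : MonStruct smc_cat;
  smc_laws : SymMonLaws smc_str
}.

Notation "a ⊗o b" := (tens (smc_str _) a b) (at level 35).
Notation "f ⊗ g" := (tensm (smc_str _) f g) (at level 35).

(* closed: every functor (- ⊗ b) has a right adjoint (universal arrows) *)
Definition Closed (M : SymMonCat) : Prop :=
  forall b c : M, exists (H : M) (ev : Hom (H ⊗o b) c),
    forall (a : M) (f : Hom (a ⊗o b) c),
      exists! g : Hom a H, ev ∘ (g ⊗ idm b) = f.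

Record Monoid (M : SymMonCat) := {
  mob : M;
  mmul : Hom (mob ⊗o mob) mob;
  munit : Hom (munitob (smc_str M)) mob;
  massoc : mmul ∘ (mmul ⊗ idm mob)
           = mmul ∘ (idm mob ⊗ mmul) ∘ assoc (smc_str M) mob mob mob;
  mlunit : mmul ∘ (munit ⊗ idm mob) = lunit (smc_str M) mob;
  mrunit : mmul ∘ (idm mob ⊗ munit) = runit (smc_str M) mob
}.

Definition MonHom {M : SymMonCat} (A B : Monoid M) (phi : Hom (mob A) (mob B))
  : Prop :=
  phi ∘ mmul A = mmul B ∘ (phi ⊗ phi) /\ phi ∘ munit A = munit B.
Arguments MonHom {M} A B phi.

Record AlgFun (C : Category) (M : SymMonCat) := {
  aob : C -> Monoid M;
  amap : forall a b, Hom a b -> Hom (mob (aob a)) (mob (aob b));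
  amap_hom : forall a b (f : Hom a b), MonHom (aob a) (aob b) (amap f);
  amap_id : forall a, amap (idm a) = idm _;
  amap_comp : forall a b c (f : Hom a b) (g : Hom b c),
      amap (g ∘ f) = amap g ∘ amap f
}.
Arguments amap {C M} a0 {a b} f.

Record AlgNat {C : Category} {M : SymMonCat} (A B : AlgFun C M) := {
  anc :> forall c, Hom (mob (aob A c)) (mob (aob B c));
  anc_hom : forall c, MonHom (aob A c) (aob B c) (anc c);
  anc_nat : forall a b (f : Hom a b), amap B f ∘ anc a = anc b ∘ amap A f
}.

Definition AlgIso {C : Category} {M : SymMonCat} (A B : AlgFun C M) : Prop :=
  exists (alpha : AlgNat A B) (beta : AlgNat B A),
    forall c, beta c ∘ alpha c = idm _ /\ alpha c ∘ beta c = idm _.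

Definition AlgPull {C D : Category} {M : SymMonCat} (L : Functor C D)
  (A : AlgFun D M) : AlgFun C M.
Proof.
  refine {| aob := fun c => aob A (L c);
            amap := fun a b f => amap A (fmap L f) |}.
  - intros a b f. apply amap_hom.
  - intro a. rewrite fmap_id. apply amap_id.
  - intros a b c f g. rewrite fmap_comp. apply amap_comp.
Defined.

Record OrthCat := {
  ocat :> Category;
  operp : forall c c1 c2 : ocat, Hom c1 c -> Hom c2 c -> Prop;
  operp_sym : forall c c1 c2 (f1 : Hom c1 c) (f2 : Hom c2 c),
      operp f1 f2 -> operp f2 f1;
  operp_comp : forall c c1 c2 (f1 : Hom c1 c) (f2 : Hom c2 c)
      d d1 d2 (g : Hom c d) (h1 : Hom d1 c1) (h2 : Hom d2 c2),
      operp f1 f2 -> operp (g ∘ f1 ∘ h1) (g ∘ f2 ∘ h2)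
}.
Arguments operp {o c c1 c2} f1 f2.

Definition isQFT {C : Category} {M : SymMonCat}
  (perp : forall c c1 c2 : C, Hom c1 c -> Hom c2 c -> Prop)
  (A : AlgFun C M) : Prop :=
  forall (c c1 c2 : C) (f1 : Hom c1 c) (f2 : Hom c2 c),
    perp c c1 c2 f1 f2 ->
    mmul (aob A c) ∘ (amap A f1 ⊗ amap A f2)
    = mmul (aob A c) ∘ braid (smc_str M) _ _ ∘ (amap A f1 ⊗ amap A f2).

Definition Wconst {C : Category} {M : SymMonCat}
  (W : forall a b : C, Hom a b -> Prop) (A : AlgFun C M) : Prop :=
  forall (a b : C) (f : Hom a b), W a b f ->
    exists g : Hom (mob (aob A b)) (mob (aob A a)),
      MonHom (aob A b) (aob A a) g /\ g ∘ amap A f = idm _ /\ amap A f ∘ g = idm _.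

(* L : C -> D is a localization of C at W (universal property, in the
   form of Kashiwara--Schapira, Def. 7.1.9) *)
Definition IsLocalization {C D : Category} (W : forall a b : C, Hom a b -> Prop)
  (L : Functor C D) : Prop :=
  (forall a b (f : Hom a b), W a b f -> is_iso (fmap L f)) /\
  (forall (E : Category) (F : Functor C E),
      (forall a b (f : Hom a b), W a b f -> is_iso (fmap F f)) ->
      exists G : Functor D E, NatIso (FComp G L) F) /\
  (forall (E : Category) (G G' : Functor D E),
      (forall alpha beta : NatTrans G G',
          (forall c, alpha (L c) = beta (L c)) -> forall d, alpha d = beta d) /\
      (forall gamma : NatTrans (FComp G L) (FComp G' L),
          exists alpha : NatTrans G G', forall c, alpha (L c) = gamma c)).

Inductive perpW {C : OrthCat} {D : Category} (L : Functor C D)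
  : forall d d1 d2 : D, Hom d1 d -> Hom d2 d -> Prop :=
| perpW_gen : forall (c c1 c2 : C) (f1 : Hom c1 c) (f2 : Hom c2 c),
    operp f1 f2 -> perpW L (fmap L f1) (fmap L f2)
| perpW_sym : forall d d1 d2 (g1 : Hom d1 d) (g2 : Hom d2 d),
    perpW L g1 g2 -> perpW L g2 g1
| perpW_comp : forall d d1 d2 (g1 : Hom d1 d) (g2 : Hom d2 d)
      e e1 e2 (k : Hom d e) (h1 : Hom e1 d1) (h2 : Hom e2 d2),
    perpW L g1 g2 -> perpW L (k ∘ g1 ∘ h1) (k ∘ g2 ∘ h2).
Arguments perpW {C D} L d d1 d2 _ _.

(* "L^* restricts to an equivalence between the full subcategory of
   Alg_As(M)^D on P and the full subcategory of Alg_As(M)^C on Q":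
   it lands in Q, is fully faithful, and is essentially surjective. *)
Definition PullbackRestrictsToEquivalence {C D : Category} {M : SymMonCat}
  (L : Functor C D) (P : AlgFun D M -> Prop) (Q : AlgFun C M -> Prop) : Prop :=
  (forall A, P A -> Q (AlgPull L A)) /\
  (forall A B, P A -> P B -> forall alpha beta : AlgNat A B,
      (forall c, alpha (L c) = beta (L c)) -> forall d, alpha d = beta d) /\
  (forall A B, P A -> P B ->
      forall gamma : AlgNat (AlgPull L A) (AlgPull L B),
        exists alpha : AlgNat A B, forall c, alpha (L c) = gamma c) /\
  (forall B, Q B -> exists A, P A /\ AlgIso (AlgPull L A) B).

(** Pulling back along [L] only precomposes, so everything reduces to two
    observations.  First, by the 2-universal property of the localization,
    functors [D -> Alg_As(M)] and their natural transformations are the same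
    as [W]-inverting functors [C -> Alg_As(M)] and theirs.  Second, Einstein
    causality is stable under symmetry and under pre- and post-composition
    with algebra maps, so an algebra-valued functor on [D] is causal for the
    relation generated by the [L f1 ⊥ L f2] as soon as it is causal on these
    generators, i.e. as soon as its pullback along [L] is an AQFT on [C]. *)
From Stdlib Require Import ProofIrrelevance IndefiniteDescription.

Section SymmetricMonoidal.
Variable M : SymMonCat.

Lemma tens_id (a b : M) : idm a ⊗ idm b = idm (a ⊗o b).
Proof. destruct (smc_laws M) as [H _]. apply H. Qed.

Lemma tens_comp (a a' a'' b b' b'' : M) (f : Hom a a') (f' : Hom a' a'')
  (g : Hom b b') (g' : Hom b' b'') : (f' ∘ f) ⊗ (g' ∘ g) = (f' ⊗ g') ∘ (f ⊗ g).
Proof. destruct (smc_laws M) as [_ [H _]]. apply H. Qed.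

Lemma braid_nat (a a' b b' : M) (f : Hom a a') (g : Hom b b') :
  (g ⊗ f) ∘ braid (smc_str M) a b = braid (smc_str M) a' b' ∘ (f ⊗ g).
Proof. destruct (smc_laws M) as (_&_&_&_&_&_&_&_&_&_&H&_). apply H. Qed.

Lemma braid_invol (a b : M) :
  braid (smc_str M) b a ∘ braid (smc_str M) a b = idm _.
Proof. destruct (smc_laws M) as (_&_&_&_&_&_&_&_&_&_&_&H&_). apply H. Qed.

(** [isQFT perp A] unfolds to [commute_in (aob A c) (amap A f1) (amap A f2)]
    for all orthogonal [f1], [f2]. *)
Definition commute_in (X : Monoid M) {a b : M}
  (g1 : Hom a (mob X)) (g2 : Hom b (mob X)) : Prop :=
  mmul X ∘ (g1 ⊗ g2) = mmul X ∘ braid (smc_str M) _ _ ∘ (g1 ⊗ g2).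

Lemma commute_in_sym (X : Monoid M) (a b : M)
  (g1 : Hom a (mob X)) (g2 : Hom b (mob X)) :
  commute_in X g1 g2 -> commute_in X g2 g1.
Proof.
  unfold commute_in. intro H.
  rewrite <- comp_assoc, <- (braid_nat _ _ _ _ g2 g1), comp_assoc, H.
  rewrite <- (comp_assoc (g1 ⊗ g2)), <- (braid_nat _ _ _ _ g1 g2).
  rewrite <- !comp_assoc, braid_invol, comp_id_r. reflexivity.
Qed.

Lemma commute_in_precomp (X : Monoid M) (a b a' b' : M)
  (g1 : Hom a (mob X)) (g2 : Hom b (mob X)) (h1 : Hom a' a) (h2 : Hom b' b) :
  commute_in X g1 g2 -> commute_in X (g1 ∘ h1) (g2 ∘ h2).
Proof.
  unfold commute_in. intro H.
  rewrite tens_comp, !comp_assoc, H. reflexivity.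
Qed.

Lemma commute_in_monhom (X Y : Monoid M) (phi : Hom (mob Y) (mob X))
  (a b : M) (g1 : Hom a (mob Y)) (g2 : Hom b (mob Y)) :
  MonHom Y X phi -> commute_in Y g1 g2 -> commute_in X (phi ∘ g1) (phi ∘ g2).
Proof.
  unfold commute_in. intros [Hmul _] H.
  rewrite tens_comp, !comp_assoc, <- Hmul.
  rewrite <- (comp_assoc (phi ⊗ phi) (braid (smc_str M) _ _)), <- braid_nat.
  rewrite !comp_assoc, <- Hmul, <- !comp_assoc, H, !comp_assoc. reflexivity.
Qed.

End SymmetricMonoidal.
Arguments commute_in {M} X {a b} g1 g2.

Section AlgebraCategory.
Variable M : SymMonCat.

Definition AlgHom (A B : Monoid M) : Type := {phi | MonHom A B phi}.

Lemma AlgHom_eq (A B : Monoid M) (phi psi : AlgHom A B) :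
  proj1_sig phi = proj1_sig psi -> phi = psi.
Proof. destruct phi, psi; simpl; intros ->. f_equal. apply proof_irrelevance. Qed.

Lemma MonHom_id (A : Monoid M) : MonHom A A (idm _).
Proof. split; rewrite ?tens_id, comp_id_l, ?comp_id_r; reflexivity. Qed.

Lemma MonHom_comp {A B E : Monoid M} {g f} :
  MonHom B E g -> MonHom A B f -> MonHom A E (g ∘ f).
Proof.
  intros [Hg1 Hg2] [Hf1 Hf2]; split.
  - rewrite tens_comp, comp_assoc, <- Hg1, <- (comp_assoc (f ⊗ f)), <- Hf1.
    symmetry; apply comp_assoc.
  - rewrite <- comp_assoc, Hf2, Hg2. reflexivity.
Qed.

(** [Alg_As(M)]; an [AlgFun C M] is a functor [C -> AlgCat M] unbundled. *)
Definition AlgCat : Category.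
Proof.
  refine {| Obj := Monoid M; Hom := AlgHom;
            idm := fun a => exist _ (idm _) (MonHom_id a);
            comp := fun a b c g f => exist _ (proj1_sig g ∘ proj1_sig f)
                      (MonHom_comp (proj2_sig g) (proj2_sig f)) |};
    intros; apply AlgHom_eq; simpl.
  - apply comp_id_l.
  - apply comp_id_r.
  - apply comp_assoc.
Defined.

Definition toF {C : Category} (A : AlgFun C M) : Functor C AlgCat.
Proof.
  refine {| fobj := fun c => aob A c : Obj AlgCat;
            fmap := fun a b f => exist _ (amap A f) (amap_hom A f) |};
    intros; apply AlgHom_eq; simpl.
  - apply amap_id.
  - apply amap_comp.
Defined.

Definition ofF {C : Category} (F : Functor C AlgCat) : AlgFun C M.
Proof.
  refine {| aob := fun c => fobj F c;
            amap := fun a b f => proj1_sig (fmap F f);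
            amap_hom := fun a b f => proj2_sig (fmap F f) |}.
  - intro a. exact (f_equal (@proj1_sig _ _) (fmap_id F a)).
  - intros a b c f g. exact (f_equal (@proj1_sig _ _) (fmap_comp F f g)).
Defined.

Definition toNT {C : Category} (A B : AlgFun C M) (alpha : AlgNat A B) :
  NatTrans (toF A) (toF B).
Proof.
  refine (@Build_NatTrans C AlgCat (toF A) (toF B)
            (fun c => exist _ (alpha c) (anc_hom alpha c)) _).
  intros; apply AlgHom_eq, anc_nat.
Defined.

Definition AlgNat_of_components {C : Category} (A B : AlgFun C M)
  (eta : forall c, AlgHom (aob A c) (aob B c))
  (eta_nat : forall a b (f : Hom a b),
      amap B f ∘ proj1_sig (eta a) = proj1_sig (eta b) ∘ amap A f) : AlgNat A B :=
  {| anc := fun c => proj1_sig (eta c);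
     anc_hom := fun c => proj2_sig (eta c);
     anc_nat := eta_nat |}.

Lemma ntnat_AlgCat {C : Category} (F G : Functor C AlgCat) (alpha : NatTrans F G)
  (a b : C) (f : Hom a b) :
  proj1_sig (fmap G f) ∘ proj1_sig (alpha a) = proj1_sig (alpha b) ∘ proj1_sig (fmap F f).
Proof. exact (f_equal (@proj1_sig _ _) (ntnat alpha f)). Qed.

Lemma isQFT_AlgIso {C : Category}
  (perp : forall c c1 c2 : C, Hom c1 c -> Hom c2 c -> Prop) (A B : AlgFun C M) :
  AlgIso A B -> isQFT perp B -> isQFT perp A.
Proof.
  intros [alpha [beta Hinv]] HB c c1 c2 f1 f2 Hperp.
  assert (Hconj : forall a b (f : Hom a b), amap A f = beta b ∘ amap B f ∘ alpha a).
  { intros a b f. rewrite <- anc_nat, <- comp_assoc.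
    destruct (Hinv a) as [-> _]. symmetry; apply comp_id_r. }
  rewrite !Hconj.
  apply commute_in_precomp, commute_in_monhom; [apply anc_hom | exact (HB _ _ _ _ _ Hperp)].
Qed.

End AlgebraCategory.
Arguments isQFT_AlgIso {M C perp A B}.
Arguments AlgCat M : clear implicits.
Arguments AlgHom_eq {M A B phi psi}.
Arguments toF {M C} A.
Arguments ofF {M C} F.
Arguments toNT {M C A B} alpha.
Arguments AlgNat_of_components {M C A B} eta eta_nat.
Arguments ntnat_AlgCat {M C F G} alpha a b f.

Lemma NatIso_inverse {C D : Category} {F G : Functor C D} {alpha : NatTrans F G} :
  (forall a, is_iso (alpha a)) ->
  exists beta : NatTrans G F,
    forall a, beta a ∘ alpha a = idm _ /\ alpha a ∘ beta a = idm _.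
Proof.
  intro Hiso.
  pose (inv := fun a => constructive_indefinite_description _ (Hiso a)).
  assert (inv_nat : forall a b (f : Hom a b),
             fmap F f ∘ proj1_sig (inv a) = proj1_sig (inv b) ∘ fmap G f).
  { intros a b f. destruct (inv a) as [ia [Ha1 Ha2]], (inv b) as [ib [Hb1 Hb2]]; simpl.
    rewrite <- (comp_id_l (fmap F f ∘ ia)), <- Hb1.
    rewrite <- !comp_assoc, (comp_assoc ia (fmap F f) (alpha b)), <- ntnat.
    rewrite <- comp_assoc, Ha2, comp_id_r. reflexivity. }
  exists {| ntc := fun a => proj1_sig (inv a); ntnat := inv_nat |}.
  intro a; simpl. destruct (inv a) as [ia Hia]; exact Hia.
Qed.

Section PullbackAlongLocalization.
Variables (M : SymMonCat) (C : OrthCat) (D : Category) (L : Functor C D).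

Lemma isQFT_perpW_iff_pullback (A : AlgFun D M) :
  isQFT (perpW L) A <-> isQFT (@operp C) (AlgPull L A).
Proof.
  split.
  - intros HA c c1 c2 f1 f2 Hperp. exact (HA _ _ _ _ _ (perpW_gen L Hperp)).
  - intros HA d d1 d2 g1 g2 Hperp.
    induction Hperp as [c c1 c2 f1 f2 Hperp | d d1 d2 g1 g2 _ IH
                       | d d1 d2 g1 g2 e e1 e2 k h1 h2 _ IH].
    + exact (HA _ _ _ _ _ Hperp).
    + now apply commute_in_sym.
    + rewrite !amap_comp.
      apply commute_in_precomp, commute_in_monhom; [apply amap_hom | exact IH].
Qed.

Variable W : forall a b : C, Hom a b -> Prop.

Lemma Wconst_pullback (A : AlgFun D M) :
  (forall a b (f : Hom a b), W a b f -> is_iso (fmap L f)) -> Wconst W (AlgPull L A).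
Proof.
  intros HLW a b f Hf. destruct (HLW a b f Hf) as [g [Hgf Hfg]].
  exists (amap A g). simpl.
  rewrite <- !amap_comp, Hgf, Hfg, !amap_id. auto using amap_hom.
Qed.

Lemma Wconst_is_iso (B : AlgFun C M) :
  Wconst W B -> forall a b (f : Hom a b), W a b f -> is_iso (fmap (toF B) f).
Proof.
  intros HB a b f Hf. destruct (HB a b f Hf) as [g [Hg [Hgf Hfg]]].
  exists (exist _ g Hg : Hom (aob B b : AlgCat M) _).
  split; apply AlgHom_eq; assumption.
Qed.

Lemma AlgIso_of_NatIso_pullback (G : Functor D (AlgCat M)) (B : AlgFun C M) :
  NatIso (FComp G L) (toF B) -> AlgIso (AlgPull L (ofF G)) B.
Proof.
  intros [alpha Halpha].
  destruct (NatIso_inverse Halpha) as [beta Hinv].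
  exists (AlgNat_of_components (A := AlgPull L (ofF G)) alpha (ntnat_AlgCat alpha)).
  exists (AlgNat_of_components (B := AlgPull L (ofF G)) beta (ntnat_AlgCat beta)).
  intro c; simpl. destruct (Hinv c) as [H1 H2].
  split; [exact (f_equal (@proj1_sig _ _) H1) | exact (f_equal (@proj1_sig _ _) H2)].
Qed.

Hypothesis HL : IsLocalization W L.

Lemma pullback_faithful (A B : AlgFun D M) (alpha beta : AlgNat A B) :
  (forall c, alpha (L c) = beta (L c)) -> forall d, alpha d = beta d.
Proof.
  intros Heq d. destruct HL as (_ & _ & Hff).
  destruct (Hff (AlgCat M) (toF A) (toF B)) as [Hfaith _].
  refine (f_equal (@proj1_sig _ _) (Hfaith (toNT alpha) (toNT beta) _ d)).
  intro c. apply AlgHom_eq, Heq.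
Qed.

Lemma pullback_full (A B : AlgFun D M) (gamma : AlgNat (AlgPull L A) (AlgPull L B)) :
  exists alpha : AlgNat A B, forall c, alpha (L c) = gamma c.
Proof.
  destruct HL as (_ & _ & Hff).
  destruct (Hff (AlgCat M) (toF A) (toF B)) as [_ Hfull].
  unshelve eset (gamma' := @Build_NatTrans C (AlgCat M) (FComp (toF A) L) (FComp (toF B) L)
                             (fun c => exist _ (gamma c) (anc_hom gamma c)) _).
  { intros a b f. apply AlgHom_eq. exact (anc_nat gamma f). }
  destruct (Hfull gamma') as [alpha Halpha].
  exists (AlgNat_of_components alpha (ntnat_AlgCat alpha)).
  intro c; simpl. rewrite Halpha. reflexivity.
Qed.

Lemma pullback_essentially_surjective (B : AlgFun C M) :
  Wconst W B -> exists A : AlgFun D M, AlgIso (AlgPull L A) B.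
Proof.
  intro HB. destruct HL as (_ & Hext & _).
  destruct (Hext (AlgCat M) (toF B) (Wconst_is_iso B HB)) as [G HG].
  exists (ofF G). exact (AlgIso_of_NatIso_pullback G B HG).
Qed.

End PullbackAlongLocalization.
Arguments pullback_faithful {M C D L W} HL {A B} alpha beta.
Arguments pullback_full {M C D L W} HL {A B} gamma.
Arguments pullback_essentially_surjective {M C D L W} HL {B}.

Theorem proposition2p5 (M : SymMonCat) (M_bicomplete : Bicomplete M)
  (M_closed : Closed M) (C : OrthCat) (C_small : is_small C)
  (W : forall a b : C, Hom a b -> Prop)
  (D : Category) (L : Functor C D) (HL : IsLocalization W L) :
  PullbackRestrictsToEquivalence (M := M) L
    (fun A => isQFT (perpW L) A)
    (fun A => isQFT (@operp C) A /\ Wconst W A).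
Proof.
  split; [| split; [| split]].
  - intros A HA. split.
    + now apply isQFT_perpW_iff_pullback.
    + apply Wconst_pullback. exact (proj1 HL).
  - intros A B _ _. exact (pullback_faithful HL).
  - intros A B _ _. exact (pullback_full HL).
  - intros B [HBqft HBconst].
    destruct (pullback_essentially_surjective HL HBconst) as [A HA].
    exists A. split; [| exact HA].
    apply isQFT_perpW_iff_pullback, (isQFT_AlgIso HA HBqft).
Qed.
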